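(* Let $n\ge r\ge 1$ and let $Q=(q_{ij})\in\mathcal P_r(n)$. Then \[ \sum_{1\le i<j\le n}\min(q_{ij},0)\ \ge\ -\frac{\beta_r\, n}{4}. \]
   Context: For integers $N\ge r\ge 1$, let $\mathcal P_r(N)=\{Q\in\mathbb R^{N\times N}: Q^2=Q,\ Q^T=Q,\ \operatorname{rank}Q=r\}$ be the set of rank-$r$ orthogonal projections. Define \[ \beta_r(N)=\frac1N\max_{Q\in\mathcal P_r(N)}\sum_{i,j=1}^N |q_{ij}|,\qquad \beta_r=\sup_{N\ge r}\beta_r(N), \] where $Q=(q_{ij})$. *)

From HB Require Import structures.
From mathcomp Require Import all_boot all_order all_algebra.
From mathcomp Require Import boolp classical_sets reals.
Set Implicit Arguments. Unset Strict Implicit. Unset Printing Implicit Defensive.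
Import Order.TTheory GRing.Theory Num.Theory.
Local Open Scope ring_scope.
Local Open Scope classical_set_scope.

(* Q is in P_r(N): a rank-r orthogonal projection in R^{N x N}. *)
Definition is_rank_proj (R : realType) (N r : nat) (Q : 'M[R]_N) : Prop :=
  Q *m Q = Q /\ Q^T = Q /\ \rank Q = r.

Definition l1_entries (R : realType) (N : nat) (Q : 'M[R]_N) : R :=
  \sum_(i < N) \sum_(j < N) `|Q i j|.

(* beta_r(N) = (1/N) max_{Q in P_r(N)} sum |q_ij|  (the max is attained,
   P_r(N) being compact, so it equals the supremum). *)
Definition beta_rN (R : realType) (r N : nat) : R :=
  sup [set x : R | exists Q : 'M[R]_N, is_rank_proj r Q /\ x = N%:R^-1 * l1_entries Q].

Definition beta_r (R : realType) (r : nat) : R :=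
  sup [set x : R | exists N : nat, (r <= N)%N /\ x = beta_rN R r N].

From HB Require Import structures.
From mathcomp Require Import all_boot all_order all_algebra.
From mathcomp Require Import boolp classical_sets reals.
From mathcomp Require Import lra.
Import Order.TTheory GRing.Theory Num.Theory.
Local Open Scope ring_scope.
Set Implicit Arguments. Unset Strict Implicit.

(* For a symmetric idempotent Q the sum of all entries is |Q 1|^2 >= 0, and
   the sum of all entries is also l1(Q) + 2 * (sum of the negative parts),
   where the diagonal contributes nothing negative (q_ii = sum_j q_ij^2).
   Hence 4 * sum_{i<j} min(q_ij, 0) >= - l1(Q) >= - beta_r n.  Finiteness of
   beta_r comes from l1(Q) <= N (r + 1) / 2, an AM-GM estimate against
   sum_ij q_ij^2 = tr Q = rank Q. *)

Lemma mxtrace_idem_factor (F : fieldType) (n k : nat) (A : 'M[F]_(n, k))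
    (B : 'M[F]_(k, n)) (L : 'M[F]_(k, n)) (M : 'M[F]_(n, k)) :
  A *m B *m (A *m B) = A *m B -> L *m A = 1%:M -> B *m M = 1%:M ->
  \tr (A *m B) = k%:R.
Proof.
move=> idem LA BM; have BA : B *m A = 1%:M.
  have -> : B *m A = L *m (A *m B *m (A *m B)) *m M.
    by rewrite !mulmxA LA mul1mx -!mulmxA BM mulmx1.
  by rewrite idem !mulmxA LA mul1mx BM.
by rewrite mxtrace_mulC BA mxtrace1.
Qed.

Lemma mxtrace_idem (F : fieldType) (n : nat) (Q : 'M[F]_n) :
  Q *m Q = Q -> \tr Q = (\rank Q)%:R.
Proof.
rewrite -{1 2 3 4}(mulmx_base Q) => idem.
have [L LA] := row_fullP (col_base_full Q).
have [M BM] := row_freeP (row_base_free Q).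
exact: mxtrace_idem_factor idem LA BM.
Qed.

Section SymmetricIdempotent.

Variables (R : realFieldType) (n : nat) (Q : 'M[R]_n).
Hypotheses (QQ : Q *m Q = Q) (QT : Q^T = Q).

Lemma sym_idem_diagE i : Q i i = \sum_j Q i j ^+ 2.
Proof. by rewrite -{1}QQ mxE; apply: eq_bigr => j _; rewrite expr2 -{2}QT mxE. Qed.

Lemma sym_idem_diag_ge0 i : 0 <= Q i i.
Proof. by rewrite sym_idem_diagE; apply: sumr_ge0 => j _; exact: sqr_ge0. Qed.

Lemma sym_idem_sum_sqr : \sum_i \sum_j Q i j ^+ 2 = (\rank Q)%:R.
Proof. by rewrite -mxtrace_idem //; apply: eq_bigr => i _; rewrite sym_idem_diagE. Qed.

Lemma sym_idem_sum_ge0 : 0 <= \sum_i \sum_j Q i j.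
Proof.
have -> : \sum_i \sum_j Q i j = \sum_k (\sum_i Q k i) ^+ 2.
  transitivity (\sum_i \sum_j \sum_k Q k i * Q k j).
    apply: eq_bigr => i _; apply: eq_bigr => j _.
    by rewrite -{1}QQ mxE; apply: eq_bigr => k _; rewrite -{1}QT mxE.
  under eq_bigr => i _ do rewrite exchange_big /=.
  rewrite exchange_big /=; apply: eq_bigr => k _.
  by rewrite expr2 mulr_suml; apply: eq_bigr => i _; rewrite mulr_sumr.
by apply: sumr_ge0 => k _; exact: sqr_ge0.
Qed.

End SymmetricIdempotent.

Lemma l1_entries_le (R : realType) (N r : nat) (Q : 'M[R]_N) :
  is_rank_proj r Q -> N%:R^-1 * l1_entries Q <= (r%:R + 1) / 2.
Proof.
move=> [QQ [QT rkQ]]; case: N Q QQ QT rkQ => [|N] Q QQ QT rkQ.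
  by rewrite /l1_entries big_ord0 mulr0; apply: divr_ge0; rewrite ?addr_ge0.
set m : R := N.+1%:R; have m_gt0 : 0 < m by rewrite ltr0n.
have amgm (x : R) : 2 * m * `|x| <= m ^+ 2 * x ^+ 2 + 1.
  rewrite -[x ^+ 2]real_normK ?num_real //.
  by have := sqr_ge0 (m * `|x| - 1); nra.
have ones : \sum_(i < N.+1) \sum_(j < N.+1) (1 : R) = m ^+ 2.
  by rewrite !big_const_ord !iter_addr_0 expr2 mulr_natr.
have bound : 2 * m * l1_entries Q <=
    m ^+ 2 * \sum_i \sum_j Q i j ^+ 2 + \sum_(i < N.+1) \sum_(j < N.+1) 1.
  rewrite /l1_entries mulr_sumr [in X in _ <= X]mulr_sumr -big_split.
  apply: ler_sum => i _.
  rewrite !mulr_sumr -big_split; apply: ler_sum => j _; exact: amgm.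
rewrite ones sym_idem_sum_sqr // rkQ in bound.
rewrite ler_pdivlMr // mulrC mulrCA ler_pdivrMl // -(ler_pM2l m_gt0).
by move: bound; rewrite expr2; lra.
Qed.

Local Open Scope classical_set_scope.

Lemma beta_rN_le (R : realType) (r N : nat) : beta_rN R r N <= (r%:R + 1) / 2.
Proof.
rewrite /beta_rN; set S := [set _ | _].
have [->|/set0P[x Sx]] := eqVneq S set0.
  by rewrite sup0; apply: divr_ge0; rewrite ?addr_ge0.
apply: ge_sup; first by exists x.
by move=> y [Q [HQ ->]]; exact: l1_entries_le.
Qed.

Lemma l1_entries_le_beta_rN (R : realType) (r N : nat) (Q : 'M[R]_N) :
  is_rank_proj r Q -> N%:R^-1 * l1_entries Q <= beta_rN R r N.
Proof.
move=> HQ; apply: ub_le_sup; last by exists Q.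
by exists ((r%:R + 1) / 2) => y [Q' [HQ' ->]]; exact: l1_entries_le.
Qed.

Lemma beta_rN_le_beta_r (R : realType) (r N : nat) :
  (r <= N)%N -> beta_rN R r N <= beta_r R r.
Proof.
move=> rN; apply: ub_le_sup; last by exists N.
by exists ((r%:R + 1) / 2) => y [M [_ ->]]; exact: beta_rN_le.
Qed.

Local Close Scope classical_set_scope.

Lemma normr_add_min0 (R : realDomainType) (x : R) : `|x| + 2 * Num.min x 0 = x.
Proof.
have [x_le0|x_gt0] := lerP x 0.
  by rewrite ler0_norm //; lra.
by rewrite gtr0_norm // mulr0 addr0.
Qed.

Lemma sum_sym_split (R : pzRingType) (n : nat) (f : 'I_n -> 'I_n -> R) :
  (forall i j, f i j = f j i) ->
  \sum_(i < n) \sum_(j < n) f i j =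
    2 * \sum_(i < n) \sum_(j < n | (i < j)%N) f i j + \sum_(i < n) f i i.
Proof.
move=> fC.
have row i : \sum_(j < n) f i j =
    \sum_(j < n | (i < j)%N) f i j + \sum_(j < n | (j < i)%N) f i j + f i i.
  rewrite (bigID (fun j : 'I_n => (i < j)%N)) /= -addrA; congr (_ + _).
  rewrite (bigD1 i) /= ?ltnn // addrC; congr (_ + _).
  apply: eq_bigl => j; rewrite -leqNgt -val_eqE /=.
  by case: ltngtP => //; rewrite ltn_neqAle => /andP[/negbTE ->].
have lower : \sum_(i < n) \sum_(j < n | (j < i)%N) f i j =
               \sum_(i < n) \sum_(j < n | (i < j)%N) f i j.
  rewrite (exchange_big_dep xpredT) //=; apply: eq_bigr => i _.
  by apply: eq_bigr => j _; exact: fC.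
by rewrite (eq_bigr _ (fun i _ => row i)) !big_split /= lower mulr2n mulrDl mul1r.
Qed.

Theorem mainTheorem2 (R : realType) (n r : nat) (Q : 'M[R]_n) :
  (1 <= r)%N -> (r <= n)%N -> is_rank_proj r Q ->
  \sum_(i < n) \sum_(j < n | (i < j)%N) Num.min (Q i j) 0
    >= - (beta_r R r * n%:R / 4).
Proof.
move=> r_gt0 rn HQ; have [QQ [QT _]] := HQ.
have n_gt0 : 0 < n%:R :> R by rewrite ltr0n (leq_trans r_gt0).
have diag_neg0 : \sum_i Num.min (Q i i) 0 = 0.
  by apply: big1 => i _; rewrite min_r // sym_idem_diag_ge0.
have neg_split : \sum_i \sum_j Num.min (Q i j) 0 =
    2 * \sum_(i < n) \sum_(j < n | (i < j)%N) Num.min (Q i j) 0.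
  rewrite sum_sym_split ?diag_neg0 ?addr0 // => i j.
  by rewrite -{1}QT mxE.
have total : \sum_i \sum_j Q i j =
    l1_entries Q + 2 * \sum_i \sum_j Num.min (Q i j) 0.
  rewrite /l1_entries mulr_sumr -big_split; apply: eq_bigr => i _.
  by rewrite mulr_sumr -big_split; apply: eq_bigr => j _; exact/esym/normr_add_min0.
have total_ge0 := sym_idem_sum_ge0 QQ QT.
have l1_le := le_trans (l1_entries_le_beta_rN HQ) (beta_rN_le_beta_r R rn).
rewrite ler_pdivrMl // in l1_le.
by move: neg_split total total_ge0 l1_le; lra.
Qed.
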